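(* Let $\mathbb{G}$ be a Carnot group of step 2 equipped with a strongly homogeneous norm $\|\cdot\|$, and let $K:\mathbb{G}\setminus\{\mathbf0\}\to\mathbb{R}^d$ be a $(Q-1)$-dimensional Calderón–Zygmund kernel with parameters $\beta$ and $\kappa$. Then there exists $C\ge1$ depending on $\kappa$ and $\beta$ such that $$|K(q^{-1}\cdot p_1)-K(q^{-1}\cdot p_2)|+|K(p_1^{-1}\cdot q)-K(p_2^{-1}\cdot q)|\lesssim\frac{\|p_2^{-1}\cdot p_1\|^{\beta/2}}{\|q^{-1}\cdot p_1\|^{Q-1+\beta/2}}$$ for all $q\in\mathbb{G}$ and $p_1,p_2\in\mathbb{G}\setminus\{q\}$ with $d(p_1,p_2)\le d(p_1,q)/C$.
   Context: Step-2 Carnot group: $\mathbb{G}\cong\mathfrak v_1\oplus\mathfrak v_2\cong\mathbb{R}^N$ in exponential coordinates, $(x,z)\cdot(x',z')=(x+x',z+z'+\tfrac12[x,x'])$, $[\mathfrak v_1,\mathfrak v_1]=\mathfrak v_2$, $\delta_t(x,z)=(tx,t^2z)$, $Q=\dim\mathfrak v_1+2\dim\mathfrak v_2$. Strongly homogeneous norm: continuous, $\|\delta_tp\|=|t|\|p\|$ for $t\in\mathbb{R}$, $\|p\|=0$ iff $p=\mathbf0$; $d(p,q)=\|q^{-1}p\|$. $K$ continuous is a $(Q-1)$-dimensional Calderón–Zygmund kernel with parameters $\kappa\in(0,1)$, $\beta\in(0,1]$ if there is $C_K\ge1$ with $|K(p)|\le C_K\|p\|^{1-Q}$ for $p\ne\mathbf0$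 and $|K(p_1)-K(p_2)|\le C_K\|p_2^{-1}p_1\|^\beta/\|p_1\|^{Q-1+\beta}$ whenever $p_1,p_2\ne\mathbf0$, $d(p_1,p_2)\le\kappa\|p_1\|$. The implicit constant in $\lesssim$ is independent of $q,p_1,p_2$. *)

From HB Require Import structures.
From mathcomp Require Import all_boot all_order all_algebra.
From mathcomp Require Import all_classical all_reals all_analysis.
Set Implicit Arguments. Unset Strict Implicit. Unset Printing Implicit Defensive.
Import Order.TTheory GRing.Theory Num.Theory.
Import numFieldNormedType.Exports.
Local Open Scope classical_set_scope.
Local Open Scope ring_scope.

Section Carnot.
Variables (R : realType) (m n : nat).

(* Points of G = v1 (+) v2 = R^m x R^n in exponential coordinates. *)
Definition pt := ('rV[R]_m * 'rV[R]_n)%type.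

Definition origin : pt := (0, 0).

Definition gmul (B : 'rV[R]_m -> 'rV[R]_m -> 'rV[R]_n) (p q : pt) : pt :=
  (p.1 + q.1, p.2 + q.2 + 2^-1 *: B p.1 q.1).

Definition ginv (p : pt) : pt := (- p.1, - p.2).

Definition dil (t : R) (p : pt) : pt := (t *: p.1, t ^+ 2 *: p.2).

Definition homdim : R := (m + 2 * n)%N%:R.

(* B is the Lie bracket v1 x v1 -> v2 of a step-2 stratified Lie algebra:
   bilinear, skew-symmetric, and [v1,v1] spans v2. *)
Definition step2_bracket (B : 'rV[R]_m -> 'rV[R]_m -> 'rV[R]_n) : Prop :=
  [/\ (forall (a : R) x y z, B (a *: x + y) z = a *: B x z + B y z),
      (forall x y, B x y = - B y x) &
      (forall w : 'rV[R]_n, exists (k : nat) (xs ys : 'I_k -> 'rV[R]_m),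
          w = \sum_(i < k) B (xs i) (ys i))].

Definition strongly_homogeneous_norm (B : 'rV[R]_m -> 'rV[R]_m -> 'rV[R]_n)
    (N : pt -> R) : Prop :=
  [/\ continuous N,
      (forall p, 0 <= N p),
      (forall (t : R) p, N (dil t p) = `|t| * N p) &
      (forall p, N p = 0 <-> p = origin)].

Definition enorm (d : nat) (v : 'rV[R]_d) : R :=
  Num.sqrt (\sum_(i < d) v ord0 i ^+ 2).

Definition CZ_kernel (B : 'rV[R]_m -> 'rV[R]_m -> 'rV[R]_n) (N : pt -> R)
    (d : nat) (kappa beta : R) (K : pt -> 'rV[R]_d) : Prop :=
  [/\ 0 < kappa < 1, 0 < beta <= 1,
      {within [set p | p <> origin], continuous K} &
      exists CK : R, 1 <= CK /\
        (forall p, p <> origin ->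
           enorm (K p) <= CK * N p `^ (1 - homdim)) /\
        (forall p1 p2, p1 <> origin -> p2 <> origin ->
           N (gmul B (ginv p2) p1) <= kappa * N p1 ->
           enorm (K p1 - K p2) <=
             CK * N (gmul B (ginv p2) p1) `^ beta
                / N p1 `^ (homdim - 1 + beta))].

End Carnot.

From HB Require Import structures.
From mathcomp Require Import all_boot all_order all_algebra.
From mathcomp Require Import all_classical all_reals all_analysis.
From mathcomp Require Import lra ring.
Import Order.TTheory GRing.Theory Num.Theory.
Import numFieldNormedType.Exports.
Set Implicit Arguments. Unset Strict Implicit. Unset Printing Implicit Defensive.
Local Open Scope ring_scope.
Local Open Scope classical_set_scope.

(* Every strongly homogeneous norm is comparable to the gauge
   max(|x|, sqrt |z|): both are homogeneous under dilations, and the gauge's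
   unit sphere is compact.  The first difference is handled by the Hoelder
   condition on K directly, because (q^-1 p2)^-1 (q^-1 p1) = p2^-1 p1.  In the
   second one, (p2^-1 q)^-1 (p1^-1 q) is the conjugate of (p2^-1 p1)^-1 by
   p1^-1 q; in step 2 conjugation only adds a bracket [x, g] to the vertical
   component, so this point has norm O(sqrt (d(p1,p2) d(p1,q))).  This square
   root is why beta becomes beta/2, and a large C makes the Hoelder condition
   applicable to both differences. *)

Lemma powR_div_le (R : realType) (u x y z L c e s : R) :
  0 <= u -> 0 <= x -> 0 < y -> 0 < z -> 0 <= L -> 0 <= e -> 0 <= s ->
  u <= L * x * y -> y <= c * z ->
  u `^ s / z `^ (e + s) <= L `^ s * c `^ (e + s) * x `^ s / y `^ e.
Proof.
move=> u_ge0 x_ge0 y_gt0 z_gt0 L_ge0 e_ge0 s_ge0 le_u le_y.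
have c_ge0 : 0 <= c.
  by rewrite -(pmulr_lge0 _ z_gt0); apply: le_trans le_y; exact: ltW.
have es_ge0 : 0 <= e + s by rewrite addr_ge0.
have hu : u `^ s <= L `^ s * x `^ s * y `^ s.
  rewrite -!powRM ?mulr_ge0 ?(ltW y_gt0) //.
  by apply: ge0_ler_powR; rewrite ?nnegrE ?mulr_ge0 ?(ltW y_gt0).
have hy : y `^ e * y `^ s <= c `^ (e + s) * z `^ (e + s).
  rewrite -powRD; last by rewrite (gt_eqF y_gt0) implybT.
  rewrite -powRM ?(ltW z_gt0) //.
  by apply: ge0_ler_powR; rewrite ?nnegrE ?mulr_ge0 ?(ltW y_gt0) ?(ltW z_gt0).
have ye_gt0 : 0 < y `^ e := powR_gt0 _ y_gt0.
rewrite ler_pdivlMr // mulrAC ler_pdivrMr ?powR_gt0 //.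
have LX_ge0 : 0 <= L `^ s * x `^ s by rewrite mulr_ge0 ?powR_ge0.
have := powR_ge0 u s; have := powR_ge0 y s; nra.
Qed.

Lemma kappa_threshold (R : realType) (kappa M : R) :
  0 < kappa < 1 -> 0 <= M -> exists2 C, 1 <= C & M + 1 <= kappa ^+ 2 * C.
Proof.
move=> /andP[kappa_gt0 kappa_lt1] M_ge0.
have k2_gt0 : 0 < kappa ^+ 2 := exprn_gt0 2 kappa_gt0.
have k2_lt1 : kappa ^+ 2 < 1 by rewrite expr_lt1 // ltW.
exists ((M + 1) / kappa ^+ 2); last by rewrite mulrC divfK // gt_eqF.
by rewrite ler_pdivlMr // mul1r; lra.
Qed.

Lemma normr_row_entry_le (R : realType) k (x : 'rV[R]_k) i : `|x 0 i| <= `|x|.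
Proof. by rewrite [leRHS]mx_normrE; apply/bigmax_geP; right; exists (0, i). Qed.

Definition gauge (R : realType) m n (p : pt R m n) : R :=
  Num.max `|p.1| (Num.sqrt `|p.2|).

Section Gauge.
Variables (R : realType) (m n : nat).
Implicit Types p : pt R m n.

Lemma gauge_ge0 p : 0 <= gauge p.
Proof. by rewrite le_max normr_ge0. Qed.

Lemma gauge_dil t p : gauge (dil t p) = `|t| * gauge p.
Proof.
by rewrite /gauge /= !normrZ sqrtrM ?mulr_ge0 // -expr2 sqrtr_sqr normr_id maxr_pMr.
Qed.

Lemma gauge_ginv p : gauge (ginv p) = gauge p.
Proof. by rewrite /gauge /= !normrN. Qed.

Lemma gauge_fst_le p : `|p.1| <= gauge p.
Proof. by rewrite le_max lexx. Qed.

Lemma gauge_snd_le p : `|p.2| <= gauge p ^+ 2.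
Proof.
rewrite -[leLHS]sqr_sqrtr // ler_pXn2r ?nnegrE ?sqrtr_ge0 ?gauge_ge0 //.
by rewrite le_max lexx orbT.
Qed.

Lemma gauge_sqr_le p : gauge p ^+ 2 <= `|p.1| ^+ 2 + `|p.2|.
Proof.
rewrite /gauge maxEle; case: ifP => _; last by rewrite lerDl.
by rewrite sqr_sqrtr // lerDr sqr_ge0.
Qed.

Lemma gauge_eq0 p : gauge p = 0 -> p = origin R m n.
Proof.
case: p => x z /eqP; rewrite /gauge /= eq_le ge_max => /andP[/andP[hx hz] _].
have : Num.sqrt `|z| == 0 by rewrite eq_le hz sqrtr_ge0.
by move: hx; rewrite sqrtr_eq0 !normr_le0 => /eqP -> /eqP ->.
Qed.

Lemma gauge_continuous : continuous (@gauge R m n).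
Proof.
have -> : @gauge R m n =
    (fun p => `|p.1| : R^o) \max (fun p => Num.sqrt `|p.2| : R^o) by [].
move=> p; apply: continuous_max.
  by apply: cvg_comp; [exact: cvg_fst|exact: norm_continuous].
apply: (continuous_comp (f := fun p : pt R m n => `|p.2|)); last exact: sqrt_continuous.
by apply: cvg_comp; [exact: cvg_snd|exact: norm_continuous].
Qed.
End Gauge.

Lemma compact_continuous_ubound (T : topologicalType) (R : realType)
    (f : T -> R) (S : set T) :
  compact S -> {within S, continuous f} ->
  exists2 M, 0 < M & forall x, S x -> f x < M.
Proof.
move=> cS cf; have := compact_bounded (continuous_compact cf cS).
move=> /ex_strict_bound_gt0[M M_gt0 hM]; exists M => // x Sx.
exact: le_lt_trans (ler_norm _) (hM _ (imageP _ Sx)).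
Qed.

Lemma compact_normr_le1 (R : realType) k : compact [set u : 'rV[R]_k | `|u| <= 1].
Proof.
apply: bounded_closed_compact.
  by exists 1; split; [exact: num_real|move=> M M1 u /le_trans; apply; exact: ltW].
apply: (@preimage_closed _ _ (fun u : 'rV[R]_k => `|u|) [set x : R | x <= 1]).
  by move=> x _; apply: norm_continuous.
exact: closed_le.
Qed.

Lemma compact_gauge_sphere (R : realType) m n :
  compact [set p : pt R m n | gauge p = 1].
Proof.
have closed_sphere : closed [set p : pt R m n | gauge p = 1].
  apply: (@preimage_closed _ _ (@gauge R m n) [set x : R | x = 1]); last exact: closed_eq.
  by move=> p _; apply: gauge_continuous.
apply: (subclosed_compact closed_sphere
  (compact_setX (@compact_normr_le1 R m) (@compact_normr_le1 R n))).
move=> [x z]; rewrite /gauge /= => /eqP; rewrite eq_le ge_max => /andP[/andP[hx hz] _].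
by split => //=; rewrite -(ler_sqrt _ ler01) sqrtr1.
Qed.

Lemma gauge_equiv (R : realType) m n B (N : pt R m n -> R) :
  strongly_homogeneous_norm B N ->
  exists2 c, 1 <= c & forall p, gauge p <= c * N p /\ N p <= c * gauge p.
Proof.
case=> N_cont N_ge0 N_dil N_eq0.
pose S := [set p : pt R m n | gauge p = 1].
have N_neq0 p : S p -> N p != 0.
  move=> Sp; apply/eqP => /N_eq0 p0; move: Sp.
  by rewrite /S /= p0 /gauge /= !normr0 sqrtr0 maxxx => /esym/eqP; rewrite oner_eq0.
have [M1 M1_gt0 NS] := compact_continuous_ubound (@compact_gauge_sphere R m n)
  (continuous_subspaceT N_cont).
have [M2 M2_gt0 NVS] : exists2 M, 0 < M & forall p, S p -> (N p)^-1 < M.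
  apply: compact_continuous_ubound; first exact: compact_gauge_sphere.
  apply: continuous_in_subspaceT => p; rewrite inE => Sp.
  exact: cvgV (N_neq0 p Sp) (N_cont p).
exists (1 + M1 + M2) => [|p]; first lra.
have [g0|g_neq0] := eqVneq (gauge p) 0.
  by rewrite g0 (gauge_eq0 g0) (proj2 (N_eq0 _)) // !mulr0.
have g_gt0 : 0 < gauge p by rewrite lt_neqAle eq_sym g_neq0 gauge_ge0.
have Sp : S (dil (gauge p)^-1 p) by rewrite /S /= gauge_dil normfV gtr0_norm // mulVf.
have Np_gt0 : 0 < N p.
  rewrite lt_neqAle N_ge0 andbT eq_sym; apply: contra (N_neq0 _ Sp).
  by rewrite N_dil => /eqP ->; rewrite mulr0.
split.
  have := NVS _ Sp; rewrite N_dil normfV gtr0_norm // invfM invrK.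
  rewrite ltr_pdivrMr // => /ltW /le_trans; apply.
  by apply: ler_wpM2r; [exact: ltW|lra].
have := NS _ Sp; rewrite N_dil normfV gtr0_norm // mulrC.
rewrite ltr_pdivrMr // => /ltW /le_trans; apply.
by apply: (ler_wpM2r (gauge_ge0 p)); lra.
Qed.

Section Bracket.
Variables (R : realType) (m n : nat) (B : 'rV[R]_m -> 'rV[R]_m -> 'rV[R]_n).
Hypothesis hB : step2_bracket B.

Lemma BDl x y z : B (x + y) z = B x z + B y z.
Proof. by case: hB => lin _ _; rewrite -[x in LHS]scale1r lin scale1r. Qed.

Lemma B0l z : B 0 z = 0.
Proof. by apply: (addrI (B 0 z)); rewrite -BDl !addr0. Qed.

Lemma BZl a x z : B (a *: x) z = a *: B x z.
Proof. by case: hB => lin _ _; rewrite -[a *: x]addr0 lin B0l addr0. Qed.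

Lemma BNl x z : B (- x) z = - B x z.
Proof. by rewrite -scaleN1r BZl scaleN1r. Qed.

Lemma B_skew x y : B x y = - B y x.
Proof. by case: hB. Qed.

Lemma BDr x y z : B z (x + y) = B z x + B z y.
Proof. by rewrite B_skew BDl opprD -!B_skew. Qed.

Lemma BZr a x z : B z (a *: x) = a *: B z x.
Proof. by rewrite B_skew BZl -scalerN -B_skew. Qed.

Lemma BNr x z : B z (- x) = - B z x.
Proof. by rewrite -scaleN1r BZr scaleN1r. Qed.

Lemma Bxx x : B x x = 0.
Proof.
have : (2 : R) *: B x x = 0 by rewrite scaler_nat mulr2n {1}B_skew addNr.
by move/eqP; rewrite scaler_eq0 pnatr_eq0 => /eqP.
Qed.

Lemma B_suml k (f : 'I_k -> 'rV[R]_m) y :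
  B (\sum_(i < k) f i) y = \sum_(i < k) B (f i) y.
Proof. exact: (big_morph (B^~ y) (fun a b => BDl a b y) (B0l y)). Qed.

Lemma B_sumr k (f : 'I_k -> 'rV[R]_m) y :
  B y (\sum_(i < k) f i) = \sum_(i < k) B y (f i).
Proof. by rewrite B_skew B_suml -sumrN; apply: eq_bigr => i _; rewrite -B_skew. Qed.

Lemma B_bounded : exists2 cB, 0 <= cB & forall x y, `|B x y| <= cB * `|x| * `|y|.
Proof.
exists (\sum_(i < m) \sum_(j < m) `|B 'e_i 'e_j|) => [|x y].
  by apply: sumr_ge0 => i _; apply: sumr_ge0.
rewrite {1}(row_sum_delta x) {1}(row_sum_delta y) B_suml !mulr_suml.
apply: le_trans (ler_norm_sum _ _ _) (ler_sum _ _) => i _.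
rewrite BZl B_sumr normrZ.
have hy : `|\sum_(j < m) B 'e_i (y 0 j *: 'e_j)| <= `|y| * \sum_(j < m) `|B 'e_i 'e_j|.
  rewrite mulr_sumr; apply: le_trans (ler_norm_sum _ _ _) (ler_sum _ _) => j _.
  by rewrite BZr normrZ; apply: ler_wpM2r => //; exact: normr_row_entry_le.
apply: le_trans (ler_pM _ _ (normr_row_entry_le x i) hy) _ => //.
by rewrite mulrA mulrC mulrA.
Qed.

Local Notation gmul := (gmul B).

Lemma ginvK : involutive (@ginv R m n).
Proof. by case=> x z; rewrite /ginv !opprK. Qed.

Lemma ginv_gmul p q : ginv (gmul p q) = gmul (ginv q) (ginv p).
Proof.
case: p q => [x z] [x' z']; rewrite /gmul /ginv /=; congr (_, _).
  by rewrite opprD addrC.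
rewrite BNl BNr opprK (B_skew x').
by apply/rowP => j; rewrite !mxE; ring.
Qed.

Lemma gmul_conjE g h : gmul (ginv g) (gmul h g) = (h.1, h.2 + B h.1 g.1).
Proof.
case: g h => [x z] [x' z']; rewrite /gmul /ginv /=; congr (_, _).
  by rewrite addrCA addNr addr0.
rewrite !(BDr, BNl, Bxx) (B_skew x).
by apply/rowP => j; rewrite !mxE; field.
Qed.

Lemma left_translation_quotient q p1 p2 :
  gmul (ginv (gmul (ginv q) p2)) (gmul (ginv q) p1) = gmul (ginv p2) p1.
Proof.
case: q p1 p2 => [x z] [x1 z1] [x2 z2]; rewrite /gmul /ginv /=; congr (_, _).
  by apply/rowP => j; rewrite !mxE; ring.
rewrite !(BDl, BDr, BNl, BNr, Bxx) (B_skew x2 x).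
by apply/rowP => j; rewrite !mxE; field.
Qed.

Lemma right_quotient_conj q p1 p2 :
  gmul (ginv (gmul (ginv p2) q)) (gmul (ginv p1) q) =
  gmul (ginv (gmul (ginv p1) q))
    (gmul (ginv (gmul (ginv p2) p1)) (gmul (ginv p1) q)).
Proof.
rewrite gmul_conjE.
case: q p1 p2 => [x z] [x1 z1] [x2 z2]; rewrite /gmul /ginv /=; congr (_, _).
  by apply/rowP => j; rewrite !mxE; ring.
rewrite !(BDl, BDr, BNl, BNr, Bxx) (B_skew x1 x) (B_skew x2 x) (B_skew x2 x1).
by apply/rowP => j; rewrite !mxE; field.
Qed.

Lemma ginv_gmul_ginv q p : ginv (gmul (ginv q) p) = gmul (ginv p) q.
Proof. by rewrite ginv_gmul ginvK. Qed.

Lemma gmul_ginv_neq0 q p : p <> q -> gmul (ginv q) p <> origin R m n.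
Proof.
case: q p => [x z] [x' z']; rewrite /gmul /ginv /origin /= => neq [].
move/eqP; rewrite addrC subr_eq0 => /eqP ex; subst x'.
rewrite BNl Bxx oppr0 scaler0 addr0 => /eqP; rewrite addrC subr_eq0 => /eqP ez.
by subst z'; apply: neq.
Qed.

Lemma gauge_conj_sqr_le cB g h :
  (forall x y, `|B x y| <= cB * `|x| * `|y|) -> 0 <= cB ->
  gauge (gmul (ginv g) (gmul h g)) ^+ 2 <= gauge h * (2 * gauge h + cB * gauge g).
Proof.
move=> hcB cB_ge0; rewrite gmul_conjE; apply: le_trans (gauge_sqr_le _) _ => /=.
have h1_le := gauge_fst_le h; have g1_le := gauge_fst_le g.
have h1_sqr : `|h.1| ^+ 2 <= gauge h ^+ 2 by rewrite ler_pXn2r ?nnegrE ?gauge_ge0.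
have hBg : `|B h.1 g.1| <= cB * gauge h * gauge g.
  apply: le_trans (hcB _ _) _; rewrite -!mulrA; apply: ler_wpM2l => //.
  exact: ler_pM.
have := ler_normD h.2 (B h.1 g.1); have := gauge_snd_le h.
rewrite !expr2 in h1_sqr *; nra.
Qed.
End Bracket.

Lemma shnorm_gt0 (R : realType) m n B (N : pt R m n -> R) p :
  strongly_homogeneous_norm B N -> p <> origin R m n -> 0 < N p.
Proof.
case=> _ N_ge0 _ N_eq0 p_neq0.
by rewrite lt_neqAle N_ge0 andbT eq_sym; apply/eqP => /N_eq0.
Qed.

Lemma homdim_ge1 (R : realType) m n (p q : pt R m n) : p <> q -> 1 <= homdim R m n.
Proof.
rewrite /homdim ler1n lt0n addn_eq0 muln_eq0 /=; apply: contra_notN.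
case/andP => /eqP m0 /eqP n0; subst m n; case: p q => [x z] [x' z'].
by congr pair; apply/rowP => -[].
Qed.

Section QuotientBounds.
Variables (R : realType) (m n : nat) (B : 'rV[R]_m -> 'rV[R]_m -> 'rV[R]_n).
Variables (N : pt R m n -> R) (c cB : R).
Hypotheses (hB : step2_bracket B) (N_ge0 : forall p, 0 <= N p) (c_ge0 : 0 <= c).
Hypotheses (gauge_le_N : forall p, gauge p <= c * N p)
  (N_le_gauge : forall p, N p <= c * gauge p).
Hypotheses (cB_ge0 : 0 <= cB) (hcB : forall x y, `|B x y| <= cB * `|x| * `|y|).

Lemma N_gmul_ginv_swap_le q p :
  N (gmul B (ginv q) p) <= c ^+ 2 * N (gmul B (ginv p) q).
Proof.
rewrite -(ginv_gmul_ginv hB p q); apply: le_trans (N_le_gauge _) _.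
by rewrite gauge_ginv expr2 -mulrA; apply: ler_wpM2l.
Qed.

Lemma N_right_quotient_sqr_le q p1 p2 :
  N (gmul B (ginv p2) p1) <= N (gmul B (ginv q) p1) ->
  N (gmul B (ginv (gmul B (ginv p2) q)) (gmul B (ginv p1) q)) ^+ 2
    <= c ^+ 4 * (2 + cB) * N (gmul B (ginv p2) p1) * N (gmul B (ginv q) p1).
Proof.
set w := gmul B (ginv p2) p1; set P := gmul B (ginv q) p1 => le_wP.
rewrite (right_quotient_conj hB) -(ginv_gmul_ginv hB q p1) -/P.
set V := gmul B _ _.
have NV : N V ^+ 2 <= c ^+ 2 * gauge V ^+ 2.
  by rewrite -exprMn ler_pXn2r ?nnegrE ?mulr_ge0 ?gauge_ge0.
have gV := gauge_conj_sqr_le hB (ginv P) (ginv w) hcB cB_ge0.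
rewrite !gauge_ginv in gV.
have gw := gauge_le_N w; have gP := gauge_le_N P.
have cw_le_cP : c * N w <= c * N P by rewrite ler_wpM2l.
have hsum : 2 * gauge w + cB * gauge P <= c * ((2 + cB) * N P).
  by have := ler_wpM2l cB_ge0 gP; nra.
have sum_ge0 : 0 <= 2 * gauge w + cB * gauge P by rewrite addr_ge0 ?mulr_ge0 ?gauge_ge0.
have hprod := ler_pM (gauge_ge0 _) sum_ge0 gw hsum.
rewrite (_ : _ * N P = c ^+ 2 * (c * N w * (c * ((2 + cB) * N P)))); last by ring.
exact: le_trans NV (ler_wpM2l (exprn_ge0 2 c_ge0) (le_trans gV hprod)).
Qed.
End QuotientBounds.

Section HolderEstimate.
Variables (R : realType) (m n d : nat) (B : 'rV[R]_m -> 'rV[R]_m -> 'rV[R]_n).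
Variables (N : pt R m n -> R) (kappa beta CK : R) (K : pt R m n -> 'rV[R]_d).
Hypotheses (hN : strongly_homogeneous_norm B N) (kappa_gt0 : 0 < kappa)
  (beta_gt0 : 0 < beta) (CK_ge0 : 0 <= CK) (Q_ge1 : 1 <= homdim R m n).
Hypothesis K_holder : forall p1 p2, p1 <> origin R m n -> p2 <> origin R m n ->
  N (gmul B (ginv p2) p1) <= kappa * N p1 ->
  enorm (K p1 - K p2) <=
    CK * N (gmul B (ginv p2) p1) `^ beta / N p1 `^ (homdim R m n - 1 + beta).

Lemma kernel_diff_le (L c C x y : R) P1 P2 :
  0 <= L -> 0 < C -> L * c ^+ 2 <= kappa ^+ 2 * C -> 0 <= x -> 0 < y -> x <= y / C ->
  P1 <> origin R m n -> P2 <> origin R m n ->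
  N (gmul B (ginv P2) P1) ^+ 2 <= L * x * y -> y <= c * N P1 ->
  enorm (K P1 - K P2) <=
    CK * (L `^ (beta / 2) * c `^ (homdim R m n - 1 + beta)) * x `^ (beta / 2)
      / y `^ (homdim R m n - 1 + beta / 2).
Proof.
move=> L_ge0 C_gt0 hLc x_ge0 y_gt0 xC_le_y P1_neq0 P2_neq0 le_u le_y.
case: (hN) => _ N_ge0 _ _; have NP1_gt0 := shnorm_gt0 hN P1_neq0.
set u := N (gmul B (ginv P2) P1) in le_u *.
have u_le : u <= kappa * N P1.
  suff : u ^+ 2 <= (kappa * N P1) ^+ 2.
    by rewrite ler_pXn2r ?nnegrE ?mulr_ge0 ?N_ge0 ?(ltW kappa_gt0).
  rewrite -(ler_pM2r C_gt0); apply: le_trans (ler_wpM2r (ltW C_gt0) le_u) _.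
  rewrite ler_pdivlMr // in xC_le_y.
  have y_sqr : y ^+ 2 <= c ^+ 2 * N P1 ^+ 2.
    by rewrite -exprMn ler_pXn2r ?nnegrE ?(ltW y_gt0) ?(le_trans (ltW y_gt0)).
  have Ly_ge0 : 0 <= L * y by rewrite mulr_ge0 ?(ltW y_gt0).
  apply: (@le_trans _ _ (L * y ^+ 2)).
    have -> : L * x * y * C = L * y * (x * C) by ring.
    by rewrite expr2 [leRHS]mulrA; apply: ler_wpM2l.
  apply: le_trans (ler_wpM2l L_ge0 y_sqr) _.
  rewrite mulrA exprMn [leRHS]mulrAC; apply: ler_wpM2r => //; exact: exprn_ge0.
apply: le_trans (K_holder P1_neq0 P2_neq0 u_le) _.
rewrite -!mulrA; apply: ler_wpM2l => //; rewrite !mulrA.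
have -> : u `^ beta = (u ^+ 2) `^ (beta / 2).
  by rewrite -powR_mulrn ?N_ge0 // -powRrM mulrC divfK.
rewrite [in homdim R m n - 1 + beta](splitr beta) addrA.
have s_ge0 : 0 <= beta / 2 by rewrite divr_ge0 // ltW.
have e_ge0 : 0 <= homdim R m n - 1 + beta / 2 by rewrite addr_ge0 // subr_ge0.
exact: powR_div_le (sqr_ge0 _) x_ge0 y_gt0 NP1_gt0 L_ge0 e_ge0 s_ge0 le_u le_y.
Qed.
End HolderEstimate.

Lemma quotient_estimates (R : realType) m n B (N : pt R m n -> R) :
  step2_bracket B -> strongly_homogeneous_norm B N ->
  exists c L : R, [/\ 0 <= c, 0 <= L & forall q p1 p2,
    N (gmul B (ginv p2) p1) <= N (gmul B (ginv q) p1) ->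
    N (gmul B (ginv (gmul B (ginv p2) q)) (gmul B (ginv p1) q)) ^+ 2
      <= L * N (gmul B (ginv p2) p1) * N (gmul B (ginv q) p1)
    /\ N (gmul B (ginv q) p1) <= c * N (gmul B (ginv p1) q)].
Proof.
move=> hB hN; have [c c_ge1 /all_and2[gauge_le_N N_le_gauge]] := gauge_equiv hN.
have [cB cB_ge0 hcB] := B_bounded hB.
case: (hN) => _ N_ge0 _ _; have c_ge0 : 0 <= c by lra.
exists (c ^+ 2), (c ^+ 4 * (2 + cB)); split => [||q p1 p2 le_wP].
- exact: exprn_ge0.
- by rewrite mulr_ge0 // ?exprn_ge0 //; lra.
split; first exact: N_right_quotient_sqr_le.
exact: N_gmul_ginv_swap_le.
Qed.

Theorem lemma2p16 (R : realType) (m n d : nat)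
    (B : 'rV[R]_m -> 'rV[R]_m -> 'rV[R]_n) (N : pt R m n -> R)
    (kappa beta : R) :
  step2_bracket B -> strongly_homogeneous_norm B N ->
  0 < kappa < 1 -> 0 < beta <= 1 ->
  exists C : R, 1 <= C /\
    forall K : pt R m n -> 'rV[R]_d, CZ_kernel B N kappa beta K ->
    exists A : R, 0 < A /\
      forall q p1 p2 : pt R m n, p1 <> q -> p2 <> q ->
        N (gmul B (ginv p2) p1) <= N (gmul B (ginv q) p1) / C ->
        enorm (K (gmul B (ginv q) p1) - K (gmul B (ginv q) p2))
        + enorm (K (gmul B (ginv p1) q) - K (gmul B (ginv p2) q))
        <= A * N (gmul B (ginv p2) p1) `^ (beta / 2)
             / N (gmul B (ginv q) p1) `^ (homdim R m n - 1 + beta / 2).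
Proof.
move=> hB hN kappa01 /andP[beta_gt0 _].
have [c [L [c_ge0 L_ge0 geom]]] := quotient_estimates hB hN.
have Lc_ge0 : 0 <= L * c ^+ 2 by rewrite mulr_ge0 // sqr_ge0.
have [C C_ge1 hC] := kappa_threshold kappa01 Lc_ge0.
exists C; split => // K [/andP[kappa_gt0 _] _ _ [CK [CK_ge1 [_ K_holder]]]].
exists (CK * (1 + L `^ (beta / 2) * c `^ (homdim R m n - 1 + beta))); split.
  by apply: mulr_gt0; [lra|rewrite ltr_pwDl // mulr_ge0 // powR_ge0].
move=> q p1 p2 p1_neq p2_neq le_wP; case: (hN) => _ N_ge0 _ _.
have C_gt0 : 0 < C by lra.
have P_neq0 := gmul_ginv_neq0 hB p1_neq.
have P_gt0 := shnorm_gt0 hN P_neq0.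
have w_le_P : N (gmul B (ginv p2) p1) <= N (gmul B (ginv q) p1).
  by apply: le_trans le_wP _; rewrite ler_pdivrMr // ler_peMr // ltW.
have [V_le P_le] := geom q p1 p2 w_le_P.
have est := kernel_diff_le hN kappa_gt0 beta_gt0 (le_trans ler01 CK_ge1)
  (homdim_ge1 p1_neq) K_holder.
apply: le_trans (lerD
  (est 1 1 C _ _ _ _ ler01 C_gt0 _ (N_ge0 _) P_gt0 le_wP P_neq0 (gmul_ginv_neq0 hB p2_neq) _ _)
  (est L c C _ _ _ _ L_ge0 C_gt0 _ (N_ge0 _) P_gt0 le_wP (gmul_ginv_neq0 hB (nesym p1_neq))
     (gmul_ginv_neq0 hB (nesym p2_neq)) V_le P_le)) _.
- by rewrite expr1n mulr1; lra.
- by rewrite (left_translation_quotient hB) mul1r expr2; apply: ler_wpM2l.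
- by rewrite mul1r.
- lra.
rewrite powR1 /= !mulr1 mulrDr mulr1 !mulrDl.
exact: lexx.
Qed.
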